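(* Let $\Lambda$ be a stable net of quadrics in $\mathbb{P}^5$, given by $F(\lambda,x)=x^T(\lambda_1A_1+\lambda_2A_2+\lambda_3A_3)x$ with symmetric $6\times6$ matrices $A_i$, and let $B=\{x\in\mathbb{P}^5: F(\lambda,x)=0\text{ for all }\lambda\}$ be its base locus. Then every singular point $x$ of $B$ is tame, i.e. the three linear forms $y\mapsto x^TA_iy$ ($i=1,2,3$) span a $2$-dimensional vector space.
   Context: A net of quadrics in $\mathbb{P}^5$ is a $3$-dimensional subspace of the space $W$ of quadratic forms in $6$ variables, viewed as a point of $Gr(3,W)\subset\mathbb{P}(\bigwedge^3W)$; stability is GIT stability for the natural $SL(6)$-action (via the Plücker embedding). *)

From mathcomp Require Import all_boot all_algebra.
From mathcomp Require Import reals.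
From mathcomp Require Import complex.
From mathcomp Require mpoly.

Set Implicit Arguments.
Unset Strict Implicit.
Unset Printing Implicit Defensive.

Import GRing.Theory.
Local Open Scope ring_scope.

Section NetsOfQuadrics.
Variable R : realType.
Local Notation C := (R[i]).

Definition symmetric_mx (M : 'M[C]_6) : Prop := M^T = M.

Definition lin_indep3 (A : 'I_3 -> 'M[C]_6) : Prop :=
  forall c : 'I_3 -> C, \sum_(i < 3) c i *: A i = 0 -> forall i, c i = 0.

Definition is_net (A : 'I_3 -> 'M[C]_6) : Prop :=
  (forall i, symmetric_mx (A i)) /\ lin_indep3 A.

(* Natural action of GL(6) (restricted to SL(6)) on quadratic forms:
   the form x |-> x^T M x is sent to x |-> (g x)^T M (g x).  (Using g or g^-1
   gives the same orbits and stabilizers-up-to-inversion.) *)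
Definition act (g : 'M[C]_6) (A : 'I_3 -> 'M[C]_6) : 'I_3 -> 'M[C]_6 :=
  fun i => g^T *m A i *m g.

(* We view W inside 'M_6 (a GL-stable subspace), so the
   Plücker point of the net spanned by A 0, A 1, A 2 is the decomposable
   alternating 3-tensor  A 0 /\ A 1 /\ A 2  in  /\^3 W  (a subspace of
   (M_6)^{(x)3}). *)
Definition pl_index := {ffun 'I_3 -> 'I_6 * 'I_6}.
Definition pl_dim := #|{: pl_index}|.

Definition plucker (A : 'I_3 -> 'M[C]_6) : 'I_pl_dim -> C :=
  fun k => let s := enum_val k in
    \det (\matrix_(i < 3, j < 3) A i (s j).1 (s j).2).

Definition zariski_closed (n : nat) (S : ('I_n -> C) -> Prop) : Prop :=
  exists P : mpoly.mpoly n C -> Prop,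
    forall v, S v <-> (forall p, P p -> mpoly.meval v p = 0).

Definition pl_orbit (A : 'I_3 -> 'M[C]_6) : ('I_pl_dim -> C) -> Prop :=
  fun v => exists g : 'M[C]_6, \det g = 1 /\ v = plucker (act g A).

Definition finite_stabilizer (A : 'I_3 -> 'M[C]_6) : Prop :=
  exists s : seq 'M[C]_6, forall g : 'M[C]_6,
    \det g = 1 -> plucker (act g A) = plucker A -> g \in s.

(* GIT stability (Mumford): the point of P(/\^3 W) is stable iff the
   SL(6)-orbit of a (any) nonzero lift is closed in /\^3 W and its
   stabilizer is finite. *)
Definition stable_net (A : 'I_3 -> 'M[C]_6) : Prop :=
  is_net A /\ zariski_closed (pl_orbit A) /\ finite_stabilizer A.

(* Points of P^5 are represented by nonzero column vectors. *)
Definition in_base_locus (A : 'I_3 -> 'M[C]_6) (x : 'cV[C]_6) : Prop :=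
  x != 0 /\ forall i, (x^T *m A i *m x) 0 0 = 0.

(* The 3 x 6 matrix whose rows are the linear forms  y |-> x^T A_i y;
   up to the factor 2 these are the gradients of the quadrics at x. *)
Definition lin_forms (A : 'I_3 -> 'M[C]_6) (x : 'cV[C]_6) : 'M[C]_(3, 6) :=
  \matrix_(i < 3, j < 6) (x^T *m A i) 0 j.

(* x is a singular point of the base locus B (complete intersection of the
   three quadrics): the Jacobian has rank < 3 at x. *)
Definition singular_point (A : 'I_3 -> 'M[C]_6) (x : 'cV[C]_6) : Prop :=
  in_base_locus A x /\ (\rank (lin_forms A x) < 3)%N.

Definition tame (A : 'I_3 -> 'M[C]_6) (x : 'cV[C]_6) : Prop :=
  \rank (lin_forms A x) = 2%N.

End NetsOfQuadrics.

From mathcomp Require Import all_boot all_algebra.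
From mathcomp Require Import fingroup perm reals complex ring.
From mathcomp Require mpoly.
From Stdlib Require Import FunctionalExtensionality.

(* Suppose the linear forms x^T A_i have rank at most 1, say x^T A_i = u_i l.  For phi with
   phi x = 1 the matrices D_c = 1 + c x phi send A_i to A_i + c u_i (phi^T l + l^T phi): the three
   quadrics are perturbed by multiples of one fixed matrix, so every Plucker coordinate (a 3x3
   minor) of D_c.Lambda is affine in c, equal to m + c mu with m the Plucker vector of Lambda.
   Rescaling to G_t = t D_(t^-6 - 1), of determinant 1, puts t^6 m + (1 - t^6) mu in the
   SL(6)-orbit of m for every t != 0; as t^6 takes every nonzero value, closedness of the orbit
   gives mu = g_0.m for some g_0 in SL(6).  Since t |-> G_t is an injective homomorphism, mu is
   fixed by every G_t, so the conjugates g_0 G_t g_0^-1 are infinitely many elements of the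
   stabilizer of m, contradicting stability. *)

Set Implicit Arguments.
Unset Strict Implicit.
Unset Printing Implicit Defensive.

Import GRing.Theory Num.Theory.
Local Open Scope ring_scope.

Lemma det_mx33 (R : comNzRingType) (M : 'M[R]_3) : \det M =
  M 0 0 * (M 1 1 * M 2 2 - M 1 2 * M 2 1) - M 0 1 * (M 1 0 * M 2 2 - M 1 2 * M 2 0)
  + M 0 2 * (M 1 0 * M 2 1 - M 1 1 * M 2 0).
Proof.
pose m (i j : nat) := M (inord i) (inord j).
have mE (i j : 'I_3) : M i j = m i j by rewrite /m !inord_val.
rewrite (expand_det_row _ 0) !big_ord_recr big_ord0 /= /cofactor.
rewrite !(expand_det_row _ 0) !big_ord_recr !big_ord0 /= /cofactor !det_mx11 !mxE.
rewrite !mE /= /bump /= -[(1 %% 3)%N]/1%N -[((1 + 1) %% 3)%N]/2%N -[(0 + 2)%N]/2%N.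
by rewrite expr2; ring.
Qed.

Lemma det_add_rank1_affine (R : comNzRingType) (M : 'M[R]_3) (u : 'cV[R]_3)
    (w : 'rV[R]_3) (c : R) :
  \det (M + c *: (u *m w)) = \det M + c * (\det (M + u *m w) - \det M).
Proof. rewrite !det_mx33 !mxE !big_ord1; ring. Qed.

Lemma det_1Dmul (R : comNzRingType) n (u : 'cV[R]_n) (v : 'rV[R]_n) :
  \det (1%:M + u *m v) = 1 + (v *m u) 0 0.
Proof.
have blockE : block_mx 1%:M (-u) 0 1%:M *m block_mx (1%:M + u *m v) 0 v 1%:M
       = block_mx 1%:M 0 v 1%:M *m block_mx 1%:M (-u) 0 (1%:M + v *m u).
  rewrite !mulmx_block; congr block_mx;
    rewrite ?mul1mx ?mulmx1 ?mul0mx ?mulmx0 ?addr0 ?add0r ?mulNmx ?mulmxN //.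
  - by rewrite addrK.
  - by rewrite addrCA addNr addr0.
move/(congr1 determinant): blockE.
rewrite !det_mulmx det_ublock !det_lblock det_ublock !det1 !mul1r !mulr1.
by move=> ->; rewrite det_mx11 !mxE mulr1n.
Qed.

(* Cauchy-Binet, before the alternating terms are collected. *)
Lemma det_sum_mul (R : comNzRingType) n (T : finType)
    (X : 'I_n -> T -> R) (Y : T -> 'I_n -> R) :
  \det (\matrix_(i, j) \sum_k X i k * Y k j) =
  \sum_(f : {ffun 'I_n -> T}) (\prod_j Y (f j) j) * \det (\matrix_(i, j) X i (f j)).
Proof.
rewrite /determinant.
have expand_prod (s : 'S_n) : \prod_i (\matrix_(i, j) \sum_k X i k * Y k j) i (s i)
    = \sum_(g : {ffun 'I_n -> T}) \prod_i (X i (g i) * Y (g i) (s i)).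
  rewrite (eq_bigr (fun i => \sum_k X i k * Y k (s i))) => [|i _]; last by rewrite mxE.
  exact: bigA_distr_bigA.
under eq_bigr => s _ do rewrite expand_prod.
under [RHS]eq_bigr => f _ do rewrite big_distrr.
rewrite [RHS]exchange_big /=; apply: eq_bigr => s _; rewrite big_distrr /=.
rewrite (reindex (fun f : {ffun 'I_n -> T} => [ffun i => f (s i)])) /=; last first.
  exists (fun f : {ffun 'I_n -> T} => [ffun i => f (s^-1 i)%g]) => f _;
  by apply/ffunP => i; rewrite !ffunE ?permK ?permKV.
apply: eq_bigr => f _; rewrite big_split /=.
rewrite [X in _ * (X * _) = _](eq_bigr (fun i => (\matrix_(i0, j) X i0 (f j)) i (s i)));
  last by move=> i _; rewrite !mxE ffunE.
rewrite [X in _ * (_ * X) = _](eq_bigr (fun i => Y (f (s i)) (s i)));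
  last by move=> i _; rewrite ffunE.
by rewrite [X in _ = X * _](reindex_inj (@perm_inj _ s)) /= [RHS]mulrC mulrA.
Qed.

Lemma mxrank_le1_factor (F : fieldType) m n (L : 'M[F]_(m, n)) :
  (\rank L <= 1)%N -> exists (u : 'cV[F]_m) (l : 'rV[F]_n), L = u *m l.
Proof.
move=> rankL.
exists (col_ebase L *m pid_mx 1), ((pid_mx 1 : 'rV_m) *m pid_mx (\rank L) *m row_ebase L).
rewrite -{1}(mulmx_ebase L) !mulmxA; congr (_ *m _); rewrite -!mulmxA !mul_pid_mx.
by rewrite (minn_idPr rankL) minnA minnn minnCA pid_mx_minv (minn_idPr rankL).
Qed.

Lemma dual_pair_of_neq0 (F : fieldType) n (x : 'cV[F]_n.+2) : x != 0 ->
  exists (phi : 'rV[F]_n.+2) (y : 'cV[F]_n.+2), [/\ phi *m x = 1%:M, phi *m y = 0 & y != 0].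
Proof.
move=> x_neq0; have [p xp_neq0] : exists p, x p 0 != 0.
  case: (pickP (fun p => x p 0 != 0)) => [p ?|x0]; first by exists p.
  case/eqP: x_neq0; apply/matrixP => i j.
  by rewrite ord1 mxE; apply/eqP/negbFE/x0.
pose q : 'I_n.+2 := if p == 0 then 1 else 0.
have qp : (p == q) = false by rewrite /q; case: (eqVneq p 0) => [->|/negbTE ->].
exists ((x p 0)^-1 *: delta_mx 0 p), (delta_mx q 0); split.
- by apply/matrixP => i j; rewrite !ord1 -scalemxAl -rowE !mxE eqxx mulVf.
- by rewrite -scalemxAl mul_delta_mx_cond qp mulr0n scaler0.
- by apply/negP => /eqP/matrixP/(_ q 0); rewrite !mxE !eqxx => /eqP; rewrite oner_eq0.
Qed.

Lemma meval_on_line (R : comNzRingType) n (p : mpoly.mpoly n R) (a b : 'I_n -> R) :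
  exists Q : {poly R}, forall s, Q.[s] = mpoly.meval (fun k => a k + s * b k) p.
Proof.
exists (\sum_(m <- mpoly.msupp p) (mpoly.mcoeff m p)%:P *
  \prod_i ((a i)%:P + b i *: 'X) ^+ (mpoly.fun_of_multinom m i)) => s.
rewrite mpoly.mevalE horner_sum; apply: eq_bigr => m _.
rewrite hornerCM horner_prod; congr (_ * _); apply: eq_bigr => i _.
by rewrite horner_exp hornerD hornerC hornerZ hornerX mulrC.
Qed.

Section Dilation.
Variables (R : comNzRingType) (n : nat) (x : 'cV[R]_n) (phi : 'rV[R]_n).

Definition dilation_mx (c : R) : 'M[R]_n := 1%:M + c *: (x *m phi).

Lemma dilation_mxM a b : phi *m x = 1%:M ->
  dilation_mx a *m dilation_mx b = dilation_mx (a + b + a * b).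
Proof.
move=> phix; rewrite /dilation_mx mulmxDl mul1mx mulmxDr mulmx1 -scalemxAl -scalemxAr.
rewrite (mulmxA (x *m phi)) -(mulmxA x) phix mulmx1 scalerA !scalerDl -!addrA.
by congr (_ + _); rewrite addrCA.
Qed.

Lemma det_dilation_mx c : phi *m x = 1%:M -> \det (dilation_mx c) = 1 + c.
Proof.
by move=> phix; rewrite /dilation_mx scalemxAl det_1Dmul -scalemxAr phix !mxE mulr1.
Qed.

Lemma dilation_mx_kernel c (y : 'cV[R]_n) : phi *m y = 0 -> dilation_mx c *m y = y.
Proof.
by move=> phiy; rewrite /dilation_mx mulmxDl mul1mx -scalemxAl -mulmxA phiy mulmx0 scaler0 addr0.
Qed.

Lemma congr_dilation_mx c (Q : 'M[R]_n) : Q^T = Q -> x^T *m Q *m x = 0 ->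
  (dilation_mx c)^T *m Q *m dilation_mx c =
  Q + c *: (phi^T *m (x^T *m Q) + (x^T *m Q)^T *m phi).
Proof.
move=> symQ isoQ.
have isoQ' : phi^T *m x^T *m Q *m x = 0 by rewrite -!mulmxA (mulmxA x^T) isoQ mulmx0.
rewrite /dilation_mx [(_ + _)^T]raddfD /= trmx1 [(_ *: _)^T]linearZ /= trmx_mul.
rewrite mulmxDl mul1mx !mulmxDr mulmx1 -!scalemxAr -!scalemxAl !mulmxA.
rewrite !mulmxDl -!scalemxAl isoQ' mul0mx scaler0 addr0.
by rewrite trmx_mul symQ trmxK scalerDr addrA -mulmxA.
Qed.

End Dilation.

Section UnimodularDilation.
Variables (F : fieldType) (n : nat) (x : 'cV[F]_n) (phi : 'rV[F]_n).
Hypothesis phix : phi *m x = 1%:M.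

Definition unimodular_dilation_mx (t : F) : 'M[F]_n :=
  t *: dilation_mx x phi (t ^- n - 1).

Lemma det_unimodular_dilation_mx t : t != 0 -> \det (unimodular_dilation_mx t) = 1.
Proof.
by move=> t_neq0; rewrite detZ det_dilation_mx // addrC subrK mulfV // expf_neq0.
Qed.

Lemma unimodular_dilation_mxM a b : a != 0 -> b != 0 ->
  unimodular_dilation_mx a *m unimodular_dilation_mx b = unimodular_dilation_mx (a * b).
Proof.
move=> a_neq0 b_neq0; rewrite /unimodular_dilation_mx -scalemxAl -scalemxAr scalerA.
by rewrite dilation_mxM //; congr (_ *: dilation_mx _ _ _); rewrite exprMn invfM; ring.
Qed.

Lemma unimodular_dilation_mx_inj (y : 'cV[F]_n) : phi *m y = 0 -> y != 0 ->
  injective unimodular_dilation_mx.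
Proof.
move=> phiy y_neq0 a b /(congr1 (mulmx^~ y)).
rewrite /unimodular_dilation_mx -!scalemxAl !dilation_mx_kernel // => /eqP.
by rewrite -subr_eq0 -scalerBl scaler_eq0 (negbTE y_neq0) orbF subr_eq0 => /eqP.
Qed.

End UnimodularDilation.

Section Plucker.
Variable R : realType.
Local Notation C := (R[i]).
Implicit Types (B : 'I_3 -> 'M[C]_6) (g h : 'M[C]_6).

Lemma act_mulmx g h B : act (g *m h) B = act h (act g B).
Proof. by apply: functional_extensionality => i; rewrite /act trmx_mul !mulmxA. Qed.

Lemma act1mx B : act 1%:M B = B.
Proof. by apply: functional_extensionality => i; rewrite /act trmx1 mul1mx mulmx1. Qed.

Lemma act_scale t g B : act (t *: g) B = fun i => t ^+ 2 *: act g B i.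
Proof.
apply: functional_extensionality => i.
by rewrite /act linearZ /= [(t *: g)^T]linearZ /= -!scalemxAl scalerA expr2.
Qed.

Lemma plucker_scale a B : plucker (fun i => a *: B i) = fun k => a ^+ 3 * plucker B k.
Proof.
apply: functional_extensionality => k; rewrite /plucker -detZ.
by congr (\det _); apply/matrixP => i j; rewrite !mxE.
Qed.

Definition plucker_map g (v : 'I_pl_dim -> C) : 'I_pl_dim -> C := fun k =>
  \sum_(f : pl_index)
    (\prod_j (g (f j).1 (enum_val k j).1 * g (f j).2 (enum_val k j).2)) * v (enum_rank f).

Lemma plucker_act g B : plucker (act g B) = plucker_map g (plucker B).
Proof.
apply: functional_extensionality => k; rewrite {1}/plucker; set s := enum_val k.
have -> : \matrix_(i, j) act g B i (s j).1 (s j).2 = \matrix_(i, j)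
    \sum_(pq : 'I_6 * 'I_6) B i pq.1 pq.2 * (g pq.1 (s j).1 * g pq.2 (s j).2).
  apply/matrixP => i j; rewrite !mxE /act.
  rewrite -(pair_bigA _ (fun p q => B i p q * (g p (s j).1 * g q (s j).2))) /=.
  rewrite exchange_big /=; apply: eq_bigr => q _; rewrite mxE big_distrl /=.
  by apply: eq_bigr => p _; rewrite !mxE [g p _ * _]mulrC -mulrA.
rewrite (det_sum_mul (fun i (pq : 'I_6 * 'I_6) => B i pq.1 pq.2)) /=.
by apply: eq_bigr => f _; rewrite /plucker enum_rankK.
Qed.

Lemma plucker_mapD g a b (v w : 'I_pl_dim -> C) :
  plucker_map g (fun k => a * v k + b * w k) =
  fun k => a * plucker_map g v k + b * plucker_map g w k.
Proof.
apply: functional_extensionality => k.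
by rewrite /plucker_map !big_distrr -big_split /=; apply: eq_bigr => f _; ring.
Qed.

Lemma plucker_add_rank1_affine B (u : 'I_3 -> C) (S : 'M[C]_6) c :
  plucker (fun i => B i + (c * u i) *: S) =
  fun k => plucker B k + c * (plucker (fun i => B i + u i *: S) k - plucker B k).
Proof.
apply: functional_extensionality => k; rewrite /plucker; set s := enum_val k.
pose M := \matrix_(i, j) B i (s j).1 (s j).2.
have rank1E a : \matrix_(i, j) (B i + (a * u i) *: S) (s j).1 (s j).2 =
    M + a *: (\col_i u i *m \row_j S (s j).1 (s j).2).
  by apply/matrixP => i j; rewrite !mxE big_ord1 !mxE mulrA.
have rank1E1 : \matrix_(i, j) (B i + u i *: S) (s j).1 (s j).2 =
    M + \col_i u i *m \row_j S (s j).1 (s j).2.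
  by apply/matrixP => i j; rewrite !mxE big_ord1 !mxE.
by rewrite rank1E rank1E1 det_add_rank1_affine.
Qed.

Lemma zariski_closed_line n (S : ('I_n -> C) -> Prop) (a b : 'I_n -> C) :
  zariski_closed S -> (forall s, s != 0 -> S (fun k => a k + s * b k)) -> S a.
Proof.
case=> P SP onS; apply/SP => p Pp; have [Q QE] := meval_on_line p a b.
have Q0 : Q = 0.
  apply: (@roots_geq_poly_eq0 _ Q [seq k.+1%:R | k <- iota 0 (size Q)]).
  - apply/allP => _ /mapP [k _ ->]; apply/rootP; rewrite QE.
    by apply: (proj1 (SP _) (onS _ _)); rewrite ?pnatr_eq0.
  - rewrite map_inj_uniq ?iota_uniq // => i j /eqP.
    by rewrite eqr_nat eqSS => /eqP.
  - by rewrite size_map size_iota.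
have -> : a = (fun k => a k + 0 * b k).
  by apply: functional_extensionality => k; rewrite mul0r addr0.
by rewrite -QE Q0 horner0.
Qed.

Lemma not_finite_stabilizer B (h : C -> 'M[C]_6) :
  (forall t, t != 0 -> \det (h t) = 1 /\ plucker (act (h t) B) = plucker B) ->
  {in predC1 0 &, injective h} -> ~ finite_stabilizer B.
Proof.
move=> stab h_inj [s sP].
have natS_neq0 k : (k.+1%:R : C) != 0 by rewrite pnatr_eq0.
have uniq_h : uniq [seq h k.+1%:R | k <- iota 0 (size s).+1].
  rewrite map_inj_uniq ?iota_uniq // => i j /h_inj.
  by rewrite !inE !natS_neq0 => /(_ isT isT)/eqP; rewrite eqr_nat eqSS => /eqP.
have sub_h : {subset [seq h k.+1%:R | k <- iota 0 (size s).+1] <= s}.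
  by move=> _ /mapP [k _ ->]; have [] := stab _ (natS_neq0 k); exact: sP.
by have := uniq_leq_size uniq_h sub_h; rewrite size_map size_iota ltnn.
Qed.

End Plucker.

Section RankOneSingularPoint.
Variable R : realType.
Local Notation C := (R[i]).
Variables (A : 'I_3 -> 'M[C]_6) (x : 'cV[C]_6) (phi : 'rV[C]_6) (u : 'cV[C]_3) (l : 'rV[C]_6).
Hypotheses (symA : forall i, symmetric_mx (A i)) (baseA : forall i, (x^T *m A i *m x) 0 0 = 0).
Hypotheses (phix : phi *m x = 1%:M) (formsA : lin_forms A x = u *m l).

Local Notation D := (dilation_mx x phi).
Local Notation G := (unimodular_dilation_mx x phi).

Let mu k := plucker (act (D 1) A) k - plucker A k.

Lemma act_dilation_mx c :
  act (D c) A = fun i => A i + (c * u i 0) *: (phi^T *m l + l^T *m phi).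
Proof.
apply: functional_extensionality => i.
rewrite /act (congr_dilation_mx phi c (symA i)); last first.
  by apply/matrixP => a b; rewrite !ord1 baseA mxE.
have -> : x^T *m A i = u i 0 *: l.
  apply/rowP => j; have := congr1 (fun M : 'M[C]_(3, 6) => M i j) formsA.
  by rewrite !mxE big_ord1 => <-.
by rewrite linearZ /= [(_ *: l)^T]linearZ /= -scalemxAl -scalerDr scalerA.
Qed.

Lemma plucker_act_dilation_mx c : plucker (act (D c) A) = fun k => plucker A k + c * mu k.
Proof.
have act1 : act (D 1) A = fun i => A i + u i 0 *: (phi^T *m l + l^T *m phi).
  by rewrite act_dilation_mx; apply: functional_extensionality => i; rewrite mul1r.
by rewrite /mu act1 act_dilation_mx (plucker_add_rank1_affine _ (fun i => u i 0)).
Qed.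

Lemma plucker_act_unimodular_dilation_mx t : t != 0 ->
  plucker (act (G t) A) = fun k => t ^+ 6 * plucker A k + (1 - t ^+ 6) * mu k.
Proof.
move=> t_neq0; rewrite act_scale plucker_scale plucker_act_dilation_mx.
apply: functional_extensionality => k; rewrite -exprM.
by field.
Qed.

Lemma plucker_map_unimodular_dilation_mx_fix t : t != 0 -> plucker_map (G t) mu = mu.
Proof.
move=> t_neq0; have two_neq0 : (2 : C) != 0 by rewrite pnatr_eq0.
have two6_neq1 : (1 - 2 ^+ 6 : C) != 0.
  by rewrite subr_eq0 eq_sym -(natrX _ 2 6) -[1]/(1%:R) eqr_nat.
(* G_t maps the orbit point of G_2 to that of G_2t; expanding both by linearity isolates
   G_t.mu.  Rewrites are confined to one side: unifying two distinct Plucker vectors unfolds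
   the determinants and takes minutes. *)
have orbit2 : plucker_map (G t) (plucker (act (G 2) A)) = plucker (act (G (2 * t)) A).
  by rewrite -[LHS]plucker_act -[X in plucker X = _]act_mulmx unimodular_dilation_mxM.
apply: functional_extensionality => k.
have map_orbit2 : plucker_map (G t) (plucker (act (G 2) A)) k =
    2 ^+ 6 * plucker_map (G t) (plucker A) k + (1 - 2 ^+ 6) * plucker_map (G t) mu k.
  by rewrite [in LHS](plucker_act_unimodular_dilation_mx two_neq0) plucker_mapD.
have orbit_t : plucker_map (G t) (plucker A) k = t ^+ 6 * plucker A k + (1 - t ^+ 6) * mu k.
  by rewrite -[plucker_map _ _]plucker_act [in LHS]plucker_act_unimodular_dilation_mx.
have orbit_2t : plucker (act (G (2 * t)) A) k =
    (2 * t) ^+ 6 * plucker A k + (1 - (2 * t) ^+ 6) * mu k.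
  by rewrite [in LHS]plucker_act_unimodular_dilation_mx ?mulf_neq0.
move: map_orbit2; rewrite orbit_t orbit2 orbit_2t.
move: (plucker_map _ mu k) (plucker A k) (mu k) => c a b balance.
have : (1 - 2 ^+ 6) * (c - b) = 0.
  by rewrite -[0](subrr ((2 * t) ^+ 6 * a + (1 - (2 * t) ^+ 6) * b)) {1}balance; ring.
by move/eqP; rewrite mulf_eq0 (negbTE two6_neq1) subr_eq0 => /eqP.
Qed.

Lemma mu_in_pl_orbit : zariski_closed (pl_orbit A) -> pl_orbit A mu.
Proof.
move=> closedA; apply: (zariski_closed_line (b := fun k => plucker A k - mu k) closedA).
move=> s s_neq0; pose t := 6.-root s.
have t6 : t ^+ 6 = s by apply: rootCK.
have t_neq0 : t != 0 by apply: contra s_neq0; rewrite -t6 => /eqP ->; rewrite expr0n.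
exists (G t); split; first exact: det_unimodular_dilation_mx.
rewrite plucker_act_unimodular_dilation_mx // t6.
by apply: functional_extensionality => k; ring.
Qed.

Lemma rank1_forms_not_stable (y : 'cV[C]_6) : phi *m y = 0 -> y != 0 ->
  zariski_closed (pl_orbit A) -> ~ finite_stabilizer A.
Proof.
move=> phiy y_neq0 /mu_in_pl_orbit [g [det_g mu_g]].
have g_unit : g \in unitmx by rewrite unitmxE det_g unitr1.
apply: (@not_finite_stabilizer _ _ (fun t => g *m G t *m invmx g)) => [t t_neq0|a b _ _].
  split; first by rewrite !det_mulmx det_inv det_g det_unimodular_dilation_mx // invr1 !mulr1.
  rewrite !act_mulmx plucker_act [plucker (act (G t) _)]plucker_act -mu_g.
  by rewrite plucker_map_unimodular_dilation_mx_fix // mu_g -plucker_act -act_mulmx mulmxV // act1mx.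
have conjK : cancel (fun M => g *m M *m invmx g) (fun M => invmx g *m M *m g).
  by move=> M; rewrite -mulmxA mulmxKV // mulKmx.
by move/(can_inj conjK)/(unimodular_dilation_mx_inj phiy y_neq0).
Qed.

End RankOneSingularPoint.

Theorem lemma3p3 (R : realType) (A : 'I_3 -> 'M[R[i]]_6) :
  stable_net A ->
  forall x : 'cV[R[i]]_6, singular_point A x -> tame A x.
Proof.
move=> [[symA _] [closedA finA]] x [[x_neq0 baseA] rank_lt3].
case: (eqVneq (\rank (lin_forms A x)) 2) => // rank_neq2; exfalso.
have rank_le1 : (\rank (lin_forms A x) <= 1)%N.
  by move: rank_lt3 rank_neq2; case: (\rank _) => [|[|[|]]].
have [u [l formsA]] := mxrank_le1_factor rank_le1.
have [phi [y [phix phiy y_neq0]]] := dual_pair_of_neq0 x_neq0.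
exact: (rank1_forms_not_stable symA baseA phix formsA phiy y_neq0 closedA finA).
Qed.
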